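(* Let $D=\{z\in\mathbb{C}:|z|<1\}$ and $\mathbb{T}=\partial D$. Let $A_0(D)$ be the space of functions $f:\overline{D}\to\mathbb{C}$ that are continuous on $\overline{D}$, holomorphic on $D$ and satisfy $f(0)=0$, endowed with the topology of uniform convergence on $\overline{D}$. Then the set of functions $f\in A_0(D)$ such that $f\restriction_{\mathbb{T}}\in Z$ is a dense $G_\delta$ subset of $A_0(D)$.
   Context: A function $g$ on $\mathbb{T}$ is identified with the $2\pi$-periodic function $y\mapsto g(e^{iy})$ on $\mathbb{R}$, and one writes $g(y)$ for $g(e^{iy})$. The class $Z$ consists of all continuous $f:\mathbb{T}\to\mathbb{C}$ such that for every $\theta\in\mathbb{R}$ $$\limsup_{y\to\theta^+}\left|\frac{\operatorname{Re}f(y)-\operatorname{Re}f(\theta)}{y-\theta}\right|=+\infty\quad\text{and}\quad \limsup_{y\to\theta^+}\left|\frac{\operatorname{Im}f(y)-\operatorname{Im}f(\theta)}{y-\theta}\right|=+\infty.$$ *)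

From Stdlib Require Import Reals.
From Coquelicot Require Import Coquelicot.
Open Scope R_scope.

Definition closed_disk (z : C) : Prop := Cmod z <= 1.
Definition open_disk (z : C) : Prop := Cmod z < 1.

Definition continuous_on_closed_disk (f : C -> C) : Prop :=
  forall z, closed_disk z ->
    forall eps : R, 0 < eps -> exists delta : R, 0 < delta /\
      forall w, closed_disk w -> Cmod (Cminus w z) < delta ->
        Cmod (Cminus (f w) (f z)) < eps.

Definition holomorphic_on_open_disk (f : C -> C) : Prop :=
  forall z, open_disk z ->
    exists l : C, @is_derive C_AbsRing C_NormedModule f z l.

(* A_0(D): only the values on the closed disk matter. *)
Definition A0 (f : C -> C) : Prop :=
  continuous_on_closed_disk f /\ holomorphic_on_open_disk f /\ f (0, 0) = (0, 0).

Definition on_circle (g : C -> C) (y : R) : C := g (cos y, sin y).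

Definition limsup_right_infinite (u : R -> R) (theta : R) : Prop :=
  forall (M delta : R), 0 < delta ->
    exists y, theta < y < theta + delta /\
      M < Rabs ((u y - u theta) / (y - theta)).

(* The class Z (for functions g on T, identified with y |-> g(e^{iy})). *)
Definition in_Z (g : C -> C) : Prop :=
  (forall y, continuity_pt (fun t => Re (on_circle g t)) y /\
             continuity_pt (fun t => Im (on_circle g t)) y) /\
  forall theta : R,
    limsup_right_infinite (fun y => Re (on_circle g y)) theta /\
    limsup_right_infinite (fun y => Im (on_circle g y)) theta.

Definition open_in_A0 (U : (C -> C) -> Prop) : Prop :=
  forall f, A0 f -> U f ->
    exists eps : R, 0 < eps /\
      forall g, A0 g ->
        (forall z, closed_disk z -> Cmod (Cminus (g z) (f z)) < eps) -> U g.

Definition dense_in_A0 (S : (C -> C) -> Prop) : Prop :=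
  forall f, A0 f -> forall eps : R, 0 < eps ->
    exists g, A0 g /\ S g /\
      forall z, closed_disk z -> Cmod (Cminus (g z) (f z)) < eps.

Definition G_delta_in_A0 (S : (C -> C) -> Prop) : Prop :=
  exists U : nat -> ((C -> C) -> Prop),
    (forall n, open_in_A0 (U n)) /\
    forall f, A0 f -> (S f <-> forall n, U n f).

From Stdlib Require Import Reals Lra Lia Psatz ZArith ClassicalEpsilon Classical.
From Coquelicot Require Import Coquelicot.
Open Scope R_scope.

(* G_delta: [Z] is the intersection over [n] of the conditions "at every point, some increment
   over a step shorter than [1/(n+1)] beats slope [n] by a margin independent of the point".
   Each condition is open, since the margin survives uniform perturbations a quarter of its
   size, and the functions of [Z] satisfy all of them by compactness of the circle.
   Density: [f] is uniformly close to [z |-> f (r z)] for [r < 1], which is holomorphic across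
   the circle and hence Lipschitz to the right of every boundary point. Adding a small multiple
   of [W z = sum (9/10)^n z^(9^n)] yields a function of [Z], because the real and imaginary
   parts of [W (e^{it})] are Weierstrass functions [sum (9/10)^n cos (9^n (t - s))], whose right
   difference quotients are unbounded at every point. *)

(** * Complex numbers and the unit circle *)

Lemma im_le_Cmod (z : C) : Rabs (Im z) <= Cmod z.
Proof.
  destruct z as [a b]. unfold Cmod, Im; simpl.
  rewrite <- sqrt_Rsqr_abs. apply sqrt_le_1_alt. unfold Rsqr. nra.
Qed.

Lemma Cmod_le_Rabs_add (a b : R) : Cmod (a, b) <= Rabs a + Rabs b.
Proof.
  replace (a, b) with (RtoC a + Ci * RtoC b)%C
    by (unfold RtoC, Ci, Cplus, Cmult; simpl; f_equal; ring).
  eapply Rle_trans; [apply Cmod_triangle|].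
  rewrite Cmod_mult, !Cmod_R, Cmod_Ci. lra.
Qed.

Lemma Cmod_sub_sym (a b : C) : Cmod (a - b) = Cmod (b - a).
Proof. replace (a - b)%C with (- (b - a))%C by ring. apply Cmod_opp. Qed.

Lemma Cmod_sub_triangle (a b c : C) : Cmod (a - c) <= Cmod (a - b) + Cmod (b - c).
Proof. replace (a - c)%C with ((a - b) + (b - c))%C by ring. apply Cmod_triangle. Qed.

Lemma Cmod_scal_nonneg (r : R) (z : C) : 0 <= r -> Cmod (RtoC r * z) = r * Cmod z.
Proof. intros Hr. rewrite Cmod_mult, Cmod_R, Rabs_pos_eq by lra. reflexivity. Qed.

Lemma Re_sub (a b : C) : Re (a - b) = Re a - Re b.
Proof. destruct a, b; unfold Re, Cminus, Cplus, Copp; simpl; ring. Qed.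

Lemma Im_sub (a b : C) : Im (a - b) = Im a - Im b.
Proof. destruct a, b; unfold Im, Cminus, Cplus, Copp; simpl; ring. Qed.

Lemma Rabs_sin_le (x : R) : Rabs (sin x) <= Rabs x.
Proof.
  assert (Hpos : forall y, 0 <= y -> Rabs (sin y) <= y).
  { intros y Hy. apply Rabs_le. split.
    - destruct (Rle_lt_dec 1 y); [pose proof (SIN_bound y); lra|].
      pose proof PI2_1. pose proof (sin_ge_0 y Hy ltac:(lra)). lra.
    - destruct (Req_dec y 0) as [->|Hy0]; [rewrite sin_0; lra|].
      left. apply sin_lt_x. lra. }
  destruct (Rle_dec 0 x).
  - rewrite (Rabs_pos_eq x) by lra. auto.
  - rewrite <- (Rabs_Ropp (sin x)), <- sin_neg, (Rabs_left x) by lra. apply Hpos. lra.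
Qed.

Lemma period_Z (f : R -> R) :
  (forall x (k : nat), f (x + 2 * INR k * PI) = f x) ->
  forall x (q : Z), f (x + 2 * IZR q * PI) = f x.
Proof.
  intros Hf x q. destruct (Z_le_gt_dec 0 q).
  - rewrite <- (Z2Nat.id q), <- INR_IZR_INZ by lia. apply Hf.
  - replace q with (- Z.of_nat (Z.to_nat (- q)))%Z by lia.
    rewrite opp_IZR, <- INR_IZR_INZ.
    rewrite <- (Hf (x + 2 * - INR (Z.to_nat (- q)) * PI) (Z.to_nat (- q))).
    f_equal. ring.
Qed.

Lemma cos_add_2PI_Z (x : R) (q : Z) : cos (x + 2 * IZR q * PI) = cos x.
Proof. exact (period_Z cos cos_period x q). Qed.

Definition cis (t : R) : C := (cos t, sin t).

Lemma Cmod_cis (t : R) : Cmod (cis t) = 1.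
Proof.
  unfold Cmod, cis; simpl. pose proof (sin2_cos2 t) as E. unfold Rsqr in E.
  replace (cos t * (cos t * 1) + sin t * (sin t * 1)) with 1 by lra. apply sqrt_1.
Qed.

Lemma closed_disk_cis (t : R) : closed_disk (cis t).
Proof. unfold closed_disk. rewrite Cmod_cis. lra. Qed.

Lemma cis_period (t : R) (q : Z) : cis (t + 2 * IZR q * PI) = cis t.
Proof.
  unfold cis. rewrite (period_Z cos cos_period), (period_Z sin sin_period). reflexivity.
Qed.

Lemma on_circle_period (g : C -> C) (x : R) (q : Z) :
  on_circle g (x + 2 * IZR q * PI) = on_circle g x.
Proof. exact (f_equal g (cis_period x q)). Qed.

Lemma Cpow_cis (t : R) (k : nat) : (cis t ^ k)%C = cis (INR k * t).
Proof.
  induction k as [|k IHk].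
  - unfold cis. simpl. rewrite Rmult_0_l, cos_0, sin_0. reflexivity.
  - rewrite Cpow_S, IHk, S_INR. unfold cis, Cmult; simpl.
    replace ((INR k + 1) * t) with (t + INR k * t) by ring.
    rewrite cos_plus, sin_plus. f_equal; ring.
Qed.

(* The chord has length [2 |sin ((y - t)/2)|]. *)
Lemma Cmod_cis_sub (y t : R) : Cmod (cis y - cis t) <= Rabs (y - t).
Proof.
  unfold cis, Cminus, Cplus, Copp, Cmod; simpl.
  set (h := (y - t) / 2).
  assert (E : (cos y + - cos t) * ((cos y + - cos t) * 1)
              + (sin y + - sin t) * ((sin y + - sin t) * 1) = Rsqr (2 * sin h)).
  { assert (Hc : cos (y - t) = 1 - 2 * sin h * sin h).
    { replace (y - t) with (2 * h) by (unfold h; field). apply cos_2a_sin. }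
    rewrite cos_minus in Hc. pose proof (sin2_cos2 y). pose proof (sin2_cos2 t).
    unfold Rsqr in *. nra. }
  rewrite E, sqrt_Rsqr_abs, Rabs_mult, (Rabs_right 2) by lra.
  replace (y - t) with (2 * h) by (unfold h; field).
  rewrite Rabs_mult, (Rabs_right 2) by lra. pose proof (Rabs_sin_le h). lra.
Qed.

Lemma Rabs_cos_sub_le (y t : R) : Rabs (cos y - cos t) <= Rabs (y - t).
Proof.
  eapply Rle_trans; [|apply (Cmod_cis_sub y t)].
  replace (cos y - cos t) with (Re (cis y - cis t)) by (unfold cis; rewrite Re_sub; reflexivity).
  apply re_le_Cmod.
Qed.

(** * Infinite right derivates *)

Lemma limsup_right_infinite_intro (u : R -> R) (theta : R) :
  (forall M delta, 0 < delta -> exists y, theta < y < theta + delta /\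
     M * (y - theta) < Rabs (u y - u theta)) ->
  limsup_right_infinite u theta.
Proof.
  intros H M delta Hdelta. destruct (H M delta Hdelta) as [y [Hy HM]].
  exists y. split; [exact Hy|].
  unfold Rdiv. rewrite Rabs_mult, Rabs_inv, (Rabs_pos_eq (y - theta)) by lra.
  apply (Rmult_lt_reg_r (y - theta)); [lra|].
  rewrite Rmult_assoc, Rinv_l, Rmult_1_r by lra. exact HM.
Qed.

Lemma limsup_right_infinite_elim (u : R -> R) (theta : R) :
  limsup_right_infinite u theta ->
  forall M delta, 0 < delta -> exists y, theta < y < theta + delta /\
     M * (y - theta) < Rabs (u y - u theta).
Proof.
  intros H M delta Hdelta. destruct (H M delta Hdelta) as [y [Hy HM]].
  exists y. split; [exact Hy|].
  unfold Rdiv in HM. rewrite Rabs_mult, Rabs_inv, (Rabs_pos_eq (y - theta)) in HM by lra.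
  apply (Rmult_lt_compat_r (y - theta)) in HM; [|lra].
  rewrite Rmult_assoc, Rinv_l, Rmult_1_r in HM by lra. exact HM.
Qed.

Lemma limsup_right_infinite_ext (u v : R -> R) (theta : R) :
  (forall y, u y = v y) -> limsup_right_infinite u theta -> limsup_right_infinite v theta.
Proof.
  intros E H M delta Hdelta. destruct (H M delta Hdelta) as [y [Hy HM]].
  exists y. split; [exact Hy|]. rewrite <- !E. exact HM.
Qed.

Lemma limsup_right_infinite_shift (u : R -> R) (s theta : R) :
  limsup_right_infinite u (theta - s) ->
  limsup_right_infinite (fun y => u (y - s)) theta.
Proof.
  intros H M delta Hdelta. destruct (H M delta Hdelta) as [y [Hy HM]].
  exists (y + s). split; [lra|].
  replace (y + s - s) with y by ring. replace (y + s - theta) with (y - (theta - s)) by ring.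
  exact HM.
Qed.

Lemma limsup_right_infinite_scal (c : R) (u : R -> R) (theta : R) : c <> 0 ->
  limsup_right_infinite u theta -> limsup_right_infinite (fun y => c * u y) theta.
Proof.
  intros Hc H M delta Hdelta. destruct (H (M / Rabs c) delta Hdelta) as [y [Hy HM]].
  exists y. split; [exact Hy|].
  assert (Hc' : 0 < Rabs c) by (apply Rabs_pos_lt; exact Hc).
  replace ((c * u y - c * u theta) / (y - theta)) with (c * ((u y - u theta) / (y - theta)))
    by (field; lra).
  rewrite Rabs_mult. apply (Rmult_lt_compat_l (Rabs c)) in HM; [|exact Hc'].
  replace (Rabs c * (M / Rabs c)) with M in HM by (field; lra). exact HM.
Qed.

Lemma limsup_right_infinite_add_lipschitz (h u : R -> R) (theta L dL : R) : 0 < dL ->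
  (forall y, theta < y < theta + dL -> Rabs (h y - h theta) <= L * (y - theta)) ->
  limsup_right_infinite u theta -> limsup_right_infinite (fun y => h y + u y) theta.
Proof.
  intros HdL Hh Hu. apply limsup_right_infinite_intro. intros M delta Hdelta.
  destruct (limsup_right_infinite_elim u theta Hu (M + L) (Rmin delta dL)
              ltac:(apply Rmin_glb_lt; lra)) as [y [Hy HM]].
  pose proof (Rmin_l delta dL). pose proof (Rmin_r delta dL).
  exists y. split; [lra|].
  specialize (Hh y ltac:(lra)).
  pose proof (Rabs_triang_inv (u y - u theta) (- (h y - h theta))) as Htri.
  rewrite Rabs_Ropp in Htri.
  replace (u y - u theta - - (h y - h theta)) with (h y + u y - (h theta + u theta)) in Htri
    by ring.
  lra.
Qed.

(** * The Weierstrass function *)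

Lemma ex_series_Rabs_le (x y : nat -> R) :
  (forall n, Rabs (x n) <= y n) -> ex_series y -> ex_series x.
Proof. intros H Hy. apply (ex_series_le x y); auto. Qed.

Lemma Series_nonneg (x : nat -> R) : (forall n, 0 <= x n) -> ex_series x -> 0 <= Series x.
Proof.
  intros H Hx. apply Rle_trans with (Series (fun n => 0 * x n)).
  - rewrite Series_scal_l. lra.
  - apply Series_le; [intros n; specialize (H n); split; lra | exact Hx].
Qed.

Lemma INR_lt_pow (x : R) (n : nat) : 2 <= x -> INR n < x ^ n.
Proof.
  intros Hx. induction n as [|n IHn]; [simpl; lra|].
  rewrite S_INR. simpl. pose proof (pow_R1_Rle x n ltac:(lra)). nra.
Qed.

Definition weier_a : R := 9/10.

Lemma weier_a_pow_pos (n : nat) : 0 < weier_a ^ n.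
Proof. apply pow_lt. unfold weier_a. lra. Qed.

Lemma weier_a_pow_le_1 (n : nat) : weier_a ^ n <= 1.
Proof. rewrite <- (pow1 n). apply pow_incr. unfold weier_a. lra. Qed.

Lemma ex_series_weier_a : ex_series (fun n => weier_a ^ n).
Proof. apply ex_series_geom. unfold weier_a. rewrite Rabs_pos_eq; lra. Qed.

Lemma Series_weier_a : Series (fun n => weier_a ^ n) = 10.
Proof.
  rewrite Series_geom by (unfold weier_a; rewrite Rabs_pos_eq; lra).
  unfold weier_a. field.
Qed.

Lemma ex_series_weier_a_scal (c : R) : ex_series (fun n => c * weier_a ^ n).
Proof. apply (ex_series_scal_l c (fun n => weier_a ^ n)). apply ex_series_weier_a. Qed.

Definition weier_term (t : R) (n : nat) : R := weier_a ^ n * cos (9 ^ n * t).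

Definition weierstrass (t : R) : R := Series (weier_term t).

Lemma ex_series_weier_term (t : R) : ex_series (weier_term t).
Proof.
  apply (ex_series_Rabs_le _ (fun n => weier_a ^ n)); [|apply ex_series_weier_a].
  intros n. unfold weier_term.
  rewrite Rabs_mult, (Rabs_pos_eq (weier_a ^ n)) by (left; apply weier_a_pow_pos).
  pose proof (weier_a_pow_pos n). pose proof (COS_bound (9 ^ n * t)).
  assert (Rabs (cos (9 ^ n * t)) <= 1) by (apply Rabs_le; lra). nra.
Qed.

Lemma pow9_odd (k : nat) : exists s : nat, 9 ^ k = 1 + 8 * INR s.
Proof.
  induction k as [|k [s Hs]].
  - exists 0%nat. simpl. lra.
  - exists (1 + 9 * s)%nat. rewrite plus_INR, mult_INR. simpl pow. rewrite Hs. simpl. ring.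
Qed.

(* [9 ^ k] is odd, so multiplying a multiple of [PI] by it does not change its parity. *)
Lemma cos_pow9_mul_ZPI (k : nat) (N : Z) (x : R) :
  cos (9 ^ k * (IZR N * PI) + x) = cos (IZR N * PI + x).
Proof.
  destruct (pow9_odd k) as [s Hs]. rewrite Hs.
  rewrite <- (cos_add_2PI_Z (IZR N * PI + x) (4 * Z.of_nat s * N)).
  f_equal. rewrite !mult_IZR, <- INR_IZR_INZ. ring.
Qed.

Lemma sin_pow9_mul (k : nat) (t : R) : sin (9 ^ k * t) = cos (9 ^ k * (t - PI / 2)).
Proof.
  destruct (pow9_odd k) as [s Hs].
  replace (9 ^ k * (t - PI / 2))
    with ((9 ^ k * t - PI / 2) + 2 * IZR (- (2 * Z.of_nat s)) * PI)
    by (rewrite opp_IZR, mult_IZR, <- INR_IZR_INZ, Hs; field).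
  rewrite cos_add_2PI_Z, <- cos_neg.
  replace (- (9 ^ k * t - PI / 2)) with (PI / 2 - 9 ^ k * t) by ring.
  symmetry. apply cos_shift.
Qed.

Lemma cos_ZPI_add (N : Z) (x : R) : cos (IZR N * PI + x) = cos (IZR N * PI) * cos x.
Proof. rewrite cos_plus, (sin_eq_0_1 (IZR N * PI)) by (exists N; reflexivity). ring. Qed.

Lemma Rabs_cos_ZPI (N : Z) : Rabs (cos (IZR N * PI)) = 1.
Proof.
  pose proof (sin2_cos2 (IZR N * PI)) as E.
  rewrite (sin_eq_0_1 (IZR N * PI)) in E by (exists N; reflexivity).
  unfold Rsqr in E. rewrite <- (sqrt_Rsqr_abs), <- sqrt_1. f_equal. unfold Rsqr. lra.
Qed.

Lemma exists_grid_point (B theta : R) : 0 < B ->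
  exists (N : Z) (xi : R), theta = PI * (IZR N + xi) / B /\ - (1/2) <= xi < 1/2.
Proof.
  intros HB. pose proof PI_RGT_0.
  set (s := B * theta / PI).
  exists (Zfloor (s + 1/2)), (s - IZR (Zfloor (s + 1/2))).
  pose proof (Zfloor_bound (s + 1/2)). split; [unfold s; field; lra | lra].
Qed.

(* Beyond index [m] the terms at the two points are [cos] of [9^k] times
   [(N + 1) PI] and [(N + xi) PI]; their difference keeps the sign of [- cos (N PI)]. *)
Lemma weier_tail_lower (m : nat) (N : Z) (xi : R) : - (1/2) <= xi <= 1/2 ->
  weier_a ^ m <= Rabs (Series (fun k => weier_term (PI * (IZR N + 1) / 9 ^ m) (m + k)
                                         - weier_term (PI * (IZR N + xi) / 9 ^ m) (m + k))).
Proof.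
  intros Hxi. pose proof PI_RGT_0. assert (HB : 0 < 9 ^ m) by (apply pow_lt; lra).
  set (sgn := cos (IZR N * PI)).
  set (T := fun k => weier_a ^ k * (1 + cos (9 ^ k * (PI * xi)))).
  assert (HT0 : forall k, 0 <= T k).
  { intros k. unfold T. pose proof (COS_bound (9 ^ k * (PI * xi))).
    pose proof (weier_a_pow_pos k). nra. }
  assert (ExT : ex_series T).
  { apply (ex_series_Rabs_le _ (fun k => 2 * weier_a ^ k)); [|apply ex_series_weier_a_scal].
    intros k. rewrite Rabs_pos_eq by apply HT0.
    unfold T. pose proof (COS_bound (9 ^ k * (PI * xi))). pose proof (weier_a_pow_pos k). nra. }
  assert (Htail : Series (fun k => weier_term (PI * (IZR N + 1) / 9 ^ m) (m + k)
                    - weier_term (PI * (IZR N + xi) / 9 ^ m) (m + k))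
                  = - sgn * (weier_a ^ m * Series T)).
  { rewrite <- !Series_scal_l. apply Series_ext. intros k.
    unfold T, weier_term. rewrite !pow_add.
    replace (9 ^ m * 9 ^ k * (PI * (IZR N + 1) / 9 ^ m))
      with (9 ^ k * (IZR (N + 1) * PI) + 0) by (rewrite plus_IZR; field; lra).
    replace (9 ^ m * 9 ^ k * (PI * (IZR N + xi) / 9 ^ m))
      with (9 ^ k * (IZR N * PI) + 9 ^ k * (PI * xi)) by (field; lra).
    rewrite !cos_pow9_mul_ZPI, Rplus_0_r, cos_ZPI_add, plus_IZR.
    replace ((IZR N + 1) * PI) with (IZR N * PI + PI) by ring.
    rewrite neg_cos. fold sgn. ring. }
  assert (HT : 1 <= Series T).
  { rewrite Series_incr_1 by exact ExT.
    assert (0 <= Series (fun k => T (S k))).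
    { apply Series_nonneg; [intros; apply HT0|]. apply (ex_series_incr_1 T). exact ExT. }
    unfold T at 1. rewrite pow_O, !Rmult_1_l.
    assert (0 <= cos (PI * xi)) by (apply cos_ge_0; nra). lra. }
  rewrite Htail, Rabs_mult, Rabs_Ropp. unfold sgn. rewrite Rabs_cos_ZPI, Rmult_1_l.
  rewrite Rabs_pos_eq by (pose proof (weier_a_pow_pos m); nra).
  pose proof (weier_a_pow_pos m). nra.
Qed.

Lemma weier_head_upper (m : nat) (y t : R) :
  Rabs (sum_f_R0 (fun n => weier_term y n - weier_term t n) m)
  <= Rabs (y - t) * (81/10) ^ (S m) / 7.
Proof.
  eapply Rle_trans; [apply Rsum_abs|].
  eapply Rle_trans; [apply (sum_Rle _ (fun n => (81/10) ^ n * Rabs (y - t)))|].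
  { intros n _. unfold weier_term.
    replace (81/10) with (weier_a * 9) by (unfold weier_a; lra). rewrite Rpow_mult_distr.
    replace (weier_a ^ n * cos (9 ^ n * y) - weier_a ^ n * cos (9 ^ n * t))
      with (weier_a ^ n * (cos (9 ^ n * y) - cos (9 ^ n * t))) by ring.
    rewrite Rabs_mult, (Rabs_pos_eq (weier_a ^ n)) by (left; apply weier_a_pow_pos).
    rewrite Rmult_assoc. apply Rmult_le_compat_l; [left; apply weier_a_pow_pos|].
    eapply Rle_trans; [apply Rabs_cos_sub_le|].
    rewrite <- Rmult_minus_distr_l, Rabs_mult, (Rabs_pos_eq (9 ^ n)) by (apply pow_le; lra).
    lra. }
  rewrite <- (scal_sum (fun n => (81/10) ^ n) m (Rabs (y - t))).
  pose proof (GP_finite (81/10) m) as HGP. rewrite Nat.add_1_r in HGP.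
  pose proof (Rabs_pos (y - t)). pose proof (pow_lt (81/10) (S m) ltac:(lra)).
  assert (sum_f_R0 (fun n => (81/10) ^ n) m <= (81/10) ^ S m / 7) by lra.
  replace (Rabs (y - t) * (81/10) ^ S m / 7) with (Rabs (y - t) * ((81/10) ^ S m / 7)) by (field).
  apply Rmult_le_compat_l; lra.
Qed.

(* Taking for [y] the point of the grid [PI Z / 9^m] just right of [theta], the tail of the
   series beyond [m] contributes at least [weier_a ^ m], while the first [m] terms only
   contribute [O((y - theta) (81/10)^m)]. *)
Lemma weierstrass_increment_at_scale (m : nat) (theta : R) : (0 < m)%nat ->
  exists y, 0 < y - theta /\ (y - theta) * 9 ^ m <= 6 /\
    (y - theta) * (81/10) ^ m / 42 <= Rabs (weierstrass y - weierstrass theta).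
Proof.
  intros Hm. pose proof PI_RGT_0. pose proof PI_4.
  destruct m as [|m0]; [lia|]. set (m := S m0). set (q := 81/10). set (B := 9 ^ m).
  assert (HaB : weier_a ^ m * B = q ^ m).
  { unfold B, q. rewrite <- Rpow_mult_distr. f_equal. unfold weier_a. lra. }
  assert (HB : 0 < B) by (apply pow_lt; lra).
  destruct (exists_grid_point B theta HB) as [N [xi [Hth Hxi]]].
  set (y := PI * (IZR N + 1) / B).
  assert (Hyt : (y - theta) * B = PI * (1 - xi)) by (rewrite Hth; unfold y; field; lra).
  assert (Hyt_pos : 0 < y - theta) by (apply (Rmult_lt_reg_r B); [lra|]; rewrite Hyt; nra).
  assert (Hyt_le : (y - theta) * B <= 6) by nra.
  exists y. split; [exact Hyt_pos|]. split; [exact Hyt_le|].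
  set (d := fun n => weier_term y n - weier_term theta n).
  assert (Hsplit : weierstrass y - weierstrass theta
                   = Series (fun k => d (m + k)%nat) - - sum_f_R0 d m0).
  { unfold weierstrass. rewrite <- Series_minus by apply ex_series_weier_term. fold d.
    rewrite (Series_incr_n d m); [simpl; ring|unfold m; lia|].
    apply (ex_series_minus (weier_term y) (weier_term theta)); apply ex_series_weier_term. }
  assert (Htail : weier_a ^ m <= Rabs (Series (fun k => d (m + k)%nat))).
  { unfold d. rewrite Hth. apply (weier_tail_lower m N xi). lra. }
  assert (Hhead : Rabs (sum_f_R0 d m0) <= (y - theta) * q ^ m / 7).
  { pose proof (weier_head_upper m0 y theta) as Hh.
    rewrite (Rabs_pos_eq (y - theta)) in Hh by lra. exact Hh. }
  assert (Ham : (y - theta) * q ^ m / 6 <= weier_a ^ m).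
  { rewrite <- HaB. pose proof (weier_a_pow_pos m). nra. }
  pose proof (Rabs_triang_inv (Series (fun k => d (m + k)%nat)) (- sum_f_R0 d m0)) as Htri.
  rewrite Rabs_Ropp in Htri. rewrite Hsplit. lra.
Qed.

Lemma weierstrass_limsup_right_infinite (theta : R) :
  limsup_right_infinite weierstrass theta.
Proof.
  apply limsup_right_infinite_intro. intros M delta Hdelta.
  destruct (INR_unbounded (Rmax (42 * M) (6 / delta))) as [m Hm].
  pose proof (Rmax_l (42 * M) (6 / delta)). pose proof (Rmax_r (42 * M) (6 / delta)).
  destruct (weierstrass_increment_at_scale (S m) theta ltac:(lia)) as [y [Hpos [Hsmall Hbig]]].
  assert (Hq : INR (S m) < (81/10) ^ S m) by (apply INR_lt_pow; lra).
  assert (H9 : (81/10) ^ S m <= 9 ^ S m) by (apply pow_incr; lra).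
  rewrite S_INR in Hq.
  exists y. split; [split; [lra|]|].
  - assert (6 < delta * 9 ^ S m).
    { apply (Rmult_lt_reg_r (/ delta)); [apply Rinv_0_lt_compat; lra|].
      replace (delta * 9 ^ S m * / delta) with (9 ^ S m) by (field; lra). unfold Rdiv in *. lra. }
    nra.
  - nra.
Qed.

(** * Complex series and complex derivatives *)

Definition Csum (x : nat -> C) : C :=
  (Series (fun n => Re (x n)), Series (fun n => Im (x n))).

Lemma ex_series_Cmod_le (x : nat -> C) (y : nat -> R) :
  (forall n, Cmod (x n) <= y n) -> ex_series y -> ex_series (fun n => Cmod (x n)).
Proof.
  intros H Hy. apply (ex_series_Rabs_le _ y); [|exact Hy].
  intros n. rewrite Rabs_pos_eq by apply Cmod_ge_0. apply H.
Qed.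

Lemma ex_series_Re (x : nat -> C) :
  ex_series (fun n => Cmod (x n)) -> ex_series (fun n => Re (x n)).
Proof. apply ex_series_Rabs_le. intros n. apply re_le_Cmod. Qed.

Lemma ex_series_Im (x : nat -> C) :
  ex_series (fun n => Cmod (x n)) -> ex_series (fun n => Im (x n)).
Proof. apply ex_series_Rabs_le. intros n. apply im_le_Cmod. Qed.

Lemma ex_series_Cmod_sub (x y : nat -> C) :
  ex_series (fun n => Cmod (x n)) -> ex_series (fun n => Cmod (y n)) ->
  ex_series (fun n => Cmod (x n - y n)).
Proof.
  intros Hx Hy. apply (ex_series_Cmod_le _ (fun n => Cmod (x n) + Cmod (y n))).
  - intros n. unfold Cminus. rewrite <- (Cmod_opp (y n)). apply Cmod_triangle.
  - apply (ex_series_plus (fun n => Cmod (x n)) (fun n => Cmod (y n))); assumption.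
Qed.

Lemma Csum_sub (x y : nat -> C) :
  ex_series (fun n => Cmod (x n)) -> ex_series (fun n => Cmod (y n)) ->
  Csum (fun n => x n - y n)%C = (Csum x - Csum y)%C.
Proof.
  intros Hx Hy. unfold Csum, Cminus, Cplus, Copp; simpl. f_equal.
  - rewrite <- Rminus_def, <- Series_minus by (apply ex_series_Re; assumption).
    apply Series_ext. intros n. destruct (x n), (y n). simpl. ring.
  - rewrite <- Rminus_def, <- Series_minus by (apply ex_series_Im; assumption).
    apply Series_ext. intros n. destruct (x n), (y n). simpl. ring.
Qed.

Lemma Csum_mult_r (x : nat -> C) (h : C) : ex_series (fun n => Cmod (x n)) ->
  Csum (fun n => x n * h)%C = (Csum x * h)%C.
Proof.
  intros Hx. pose proof (ex_series_Re x Hx) as HRe. pose proof (ex_series_Im x Hx) as HIm.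
  destruct h as [h1 h2]. unfold Csum, Cmult; simpl. f_equal.
  - rewrite <- !Series_scal_r, <- Series_minus.
    + apply Series_ext. intros n. destruct (x n). simpl. ring.
    + apply (ex_series_scal_r h1 (fun n => Re (x n))). exact HRe.
    + apply (ex_series_scal_r h2 (fun n => Im (x n))). exact HIm.
  - rewrite <- !Series_scal_r, <- Series_plus.
    + apply Series_ext. intros n. destruct (x n). simpl. ring.
    + apply (ex_series_scal_r h2 (fun n => Re (x n))). exact HRe.
    + apply (ex_series_scal_r h1 (fun n => Im (x n))). exact HIm.
Qed.

Lemma Cmod_Csum_le (x : nat -> C) (y : nat -> R) :
  (forall n, Cmod (x n) <= y n) -> ex_series y -> Cmod (Csum x) <= 2 * Series y.
Proof.
  intros H Hy. unfold Csum. eapply Rle_trans; [apply Cmod_le_Rabs_add|].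
  assert (Hpart : forall p : C -> R, (forall z, Rabs (p z) <= Cmod z) ->
            Rabs (Series (fun n => p (x n))) <= Series y).
  { intros p Hp.
    assert (Hpy : forall n, Rabs (p (x n)) <= y n)
      by (intros n; eapply Rle_trans; [apply Hp|apply H]).
    eapply Rle_trans; [apply Series_Rabs, (ex_series_Rabs_le _ y); [|exact Hy]|].
    - intros n. rewrite Rabs_Rabsolu. apply Hpy.
    - apply Series_le; [|exact Hy]. intros n. split; [apply Rabs_pos|apply Hpy]. }
  pose proof (Hpart Re re_le_Cmod). pose proof (Hpart Im im_le_Cmod). lra.
Qed.

Lemma locally_C_intro (z : C) (P : C -> Prop) (d : R) : 0 < d ->
  (forall w, Cmod (w - z) < d -> P w) -> @locally (AbsRing_UniformSpace C_AbsRing) z P.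
Proof. intros Hd H. exists (mkposreal d Hd). intros w Hw. apply H. exact Hw. Qed.

Lemma locally_C_elim (z : C) (P : C -> Prop) :
  @locally (AbsRing_UniformSpace C_AbsRing) z P ->
  exists d, 0 < d /\ forall w, Cmod (w - z) < d -> P w.
Proof. intros [e He]. exists e. split; [apply cond_pos|]. intros w Hw. apply He. exact Hw. Qed.

Lemma is_derive_of_quadratic_remainder (F : C -> C) (z l : C) (delta K : R) : 0 < delta ->
  (forall w, Cmod (w - z) < delta -> Cmod (F w - F z - (w - z) * l) <= K * Cmod (w - z) ^ 2) ->
  @is_derive C_AbsRing C_NormedModule F z l.
Proof.
  intros Hdelta H. split; [apply is_linear_scal_l|].
  intros x Hx.
  pose proof (@is_filter_lim_locally_unique C_AbsRing (AbsRing_NormedModule C_AbsRing) z x Hx).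
  subst x. intros eps. pose proof (cond_pos eps) as Heps. pose proof (Rabs_pos K).
  apply (locally_C_intro _ _ (Rmin delta (eps / (Rabs K + 1))));
    [apply Rmin_glb_lt; [lra|apply Rdiv_lt_0_compat; lra]|].
  intros w Hw.
  change (Cmod (F w - F z - (w - z) * l) <= eps * Cmod (w - z)).
  pose proof (Rmin_l delta (eps / (Rabs K + 1))). pose proof (Rmin_r delta (eps / (Rabs K + 1))).
  pose proof (Cmod_ge_0 (w - z)) as Hd0. set (d := Cmod (w - z)) in *.
  specialize (H w). change (Cmod (w - z)) with d in H.
  eapply Rle_trans; [apply H; lra|].
  assert (Hd : d * (Rabs K + 1) <= eps).
  { apply (Rmult_le_reg_r (/ (Rabs K + 1))); [apply Rinv_0_lt_compat; lra|].
    rewrite Rmult_assoc, Rinv_r, Rmult_1_r by lra. unfold Rdiv in *. lra. }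
  pose proof (Rle_abs K). replace (K * d ^ 2) with ((K * d) * d) by ring.
  apply Rmult_le_compat_r; nra.
Qed.

Lemma is_derive_lipschitz (F : C -> C) (p l : C) :
  @is_derive C_AbsRing C_NormedModule F p l ->
  exists delta, 0 < delta /\ forall w, Cmod (w - p) < delta ->
    Cmod (F w - F p) <= (Cmod l + 1) * Cmod (w - p).
Proof.
  intros [_ H]. specialize (H p (fun P HP => HP) (mkposreal 1 Rlt_0_1)).
  apply locally_C_elim in H. destruct H as [d [Hd H]]. exists d. split; [exact Hd|].
  intros w Hw. specialize (H w Hw).
  change (Cmod (F w - F p - (w - p) * l) <= 1 * Cmod (w - p)) in H.
  replace (F w - F p)%C with ((F w - F p - (w - p) * l) + (w - p) * l)%C by ring.
  eapply Rle_trans; [apply Cmod_triangle|]. rewrite Cmod_mult.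
  pose proof (Cmod_ge_0 (w - p)). nra.
Qed.

Lemma is_derive_Cscal {V : NormedModule C_AbsRing} (F : C -> V) (z c : C) (l : V) :
  is_derive F z l -> is_derive (fun x => scal c (F x)) z (scal c l).
Proof.
  intros H. eapply filterdiff_ext_lin.
  - exact (filterdiff_scal_r_fct (U := AbsRing_NormedModule C_AbsRing) c F _ Cmult_comm H).
  - intros y. rewrite !scal_assoc. f_equal. apply Cmult_comm.
Qed.

Lemma is_derive_Cmult_l (F : C -> C) (z l c : C) :
  @is_derive C_AbsRing C_NormedModule F z l ->
  @is_derive C_AbsRing C_NormedModule (fun x => c * F x)%C z (c * l)%C.
Proof. exact (@is_derive_Cscal C_NormedModule F z c l). Qed.

Lemma is_derive_dilate (f : C -> C) (r : R) (z l : C) :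
  @is_derive C_AbsRing C_NormedModule f (RtoC r * z)%C l ->
  @is_derive C_AbsRing C_NormedModule (fun x => f (RtoC r * x)%C) z (RtoC r * l)%C.
Proof.
  intros H. apply (is_derive_comp f (fun x => RtoC r * x)%C z l (RtoC r) H).
  pose proof (@is_derive_Cscal (AbsRing_NormedModule C_AbsRing) (fun x => x) z (RtoC r) (RtoC 1)
                (is_derive_id z)) as Hr.
  change (scal (RtoC r) (RtoC 1)) with (RtoC r * RtoC 1)%C in Hr.
  rewrite Cmult_1_r in Hr. exact Hr.
Qed.

Lemma Cmod_Cpow_le (z : C) (rho : R) (k : nat) : Cmod z <= rho -> Cmod (z ^ k) <= rho ^ k.
Proof. intros H. rewrite Cmod_pow. apply pow_incr. split; [apply Cmod_ge_0|exact H]. Qed.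

Lemma Cmod_Cpow_sub_le (w z : C) (k : nat) : Cmod w <= 1 -> Cmod z <= 1 ->
  Cmod (w ^ k - z ^ k) <= INR k * Cmod (w - z).
Proof.
  intros Hw Hz. induction k as [|k IHk].
  - simpl. replace (1 - 1)%C with (RtoC 0) by ring. rewrite Cmod_0. lra.
  - rewrite !Cpow_S.
    replace (w * w ^ k - z * z ^ k)%C with (w * (w ^ k - z ^ k) + z ^ k * (w - z))%C by ring.
    eapply Rle_trans; [apply Cmod_triangle|]. rewrite !Cmod_mult, S_INR.
    pose proof (Cmod_Cpow_le z 1 k Hz) as Hzk. rewrite pow1 in Hzk.
    pose proof (Cmod_ge_0 w). pose proof (Cmod_ge_0 (w ^ k - z ^ k)).
    pose proof (Cmod_ge_0 (w - z)). pose proof (Cmod_ge_0 (z ^ k)). nra.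
Qed.

Definition Cpow_remainder (w z : C) (k : nat) : C :=
  (w ^ k - z ^ k - RtoC (INR k) * z ^ pred k * (w - z))%C.

Lemma Cpow_remainder_S (w z : C) (k : nat) :
  Cpow_remainder w z (S k)
  = (w * Cpow_remainder w z k + RtoC (INR k) * z ^ pred k * ((w - z) * (w - z)))%C.
Proof.
  unfold Cpow_remainder. rewrite S_INR, RtoC_plus.
  destruct k; simpl pred; rewrite ?Cpow_S; simpl; ring.
Qed.

Lemma Cmod_Cpow_pred_le (z : C) (rho : R) (k : nat) : 0 < rho -> Cmod z <= rho ->
  rho ^ 2 * (INR k * Cmod (z ^ pred k)) <= INR k * rho ^ S k.
Proof.
  intros Hr Hz. destruct k as [|j]; [simpl; lra|]. simpl pred.
  pose proof (Cmod_Cpow_le z rho j Hz). pose proof (pos_INR (S j)).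
  replace (rho ^ S (S j)) with (rho ^ 2 * rho ^ j) by (simpl; ring).
  assert (0 <= rho ^ 2 * INR (S j)) by (apply Rmult_le_pos; [apply pow_le|]; lra).
  replace (rho ^ 2 * (INR (S j) * Cmod (z ^ j))) with (rho ^ 2 * INR (S j) * Cmod (z ^ j)) by ring.
  replace (INR (S j) * (rho ^ 2 * rho ^ j)) with (rho ^ 2 * INR (S j) * rho ^ j) by ring.
  apply Rmult_le_compat_l; assumption.
Qed.

Lemma Cmod_Cpow_remainder_le (w z : C) (rho : R) (k : nat) :
  0 < rho -> Cmod w <= rho -> Cmod z <= rho ->
  rho ^ 2 * Cmod (Cpow_remainder w z k) <= INR k * INR k * rho ^ k * Cmod (w - z) ^ 2.
Proof.
  intros Hr Hw Hz. set (d := Cmod (w - z)).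
  assert (Hd : 0 <= d ^ 2) by apply pow2_ge_0.
  induction k as [|k IHk].
  - unfold Cpow_remainder. replace (w ^ 0 - z ^ 0 - RtoC (INR 0) * z ^ pred 0 * (w - z))%C
      with (RtoC 0) by (simpl; ring).
    rewrite Cmod_0. simpl. lra.
  - rewrite Cpow_remainder_S.
    eapply Rle_trans; [apply Rmult_le_compat_l; [apply pow_le; lra|apply Cmod_triangle]|].
    rewrite Rmult_plus_distr_l, !Cmod_mult, Cmod_R, Rabs_pos_eq by apply pos_INR.
    fold d. replace (d * d) with (d ^ 2) by ring.
    pose proof (Cmod_Cpow_pred_le z rho k Hr Hz) as Hlast.
    assert (Hfirst : rho ^ 2 * (Cmod w * Cmod (Cpow_remainder w z k))
                     <= rho * (INR k * INR k * rho ^ k * d ^ 2)).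
    { pose proof (Cmod_ge_0 (Cpow_remainder w z k)).
      replace (rho ^ 2 * (Cmod w * Cmod (Cpow_remainder w z k)))
        with (Cmod w * (rho ^ 2 * Cmod (Cpow_remainder w z k))) by ring.
      apply Rle_trans with (rho * (rho ^ 2 * Cmod (Cpow_remainder w z k))).
      - apply Rmult_le_compat_r; [apply Rmult_le_pos; [apply pow_le|]|]; lra.
      - apply Rmult_le_compat_l; lra. }
    pose proof (pos_INR k).
    assert (0 <= rho ^ S k * d ^ 2) by (apply Rmult_le_pos; [apply pow_le|]; lra).
    replace (rho * (INR k * INR k * rho ^ k * d ^ 2)) with (INR k * INR k * (rho ^ S k * d ^ 2))
      in Hfirst by (simpl; ring).
    replace (rho ^ 2 * (INR k * Cmod (z ^ pred k) * d ^ 2))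
      with (rho ^ 2 * (INR k * Cmod (z ^ pred k)) * d ^ 2) by ring.
    apply (Rmult_le_compat_r (d ^ 2)) in Hlast; [|exact Hd].
    rewrite S_INR. nra.
Qed.

Lemma exp_ge_cube (x : R) : 0 <= x -> x ^ 3 / 6 <= exp x.
Proof.
  intros Hx. pose proof (exp_ge_taylor x 3 Hx) as H.
  replace (sum_f_R0 (fun k => x ^ k / INR (Factorial.fact k)) 3)
    with (1 + x + x ^ 2 / 2 + x ^ 3 / 6) in H by (simpl; field).
  assert (0 <= x ^ 2) by (apply pow_le; lra). lra.
Qed.

Lemma sqr_mul_pow_bounded (rho : R) : 0 < rho < 1 ->
  exists K, forall k : nat, INR k * INR k * rho ^ k <= K.
Proof.
  intros Hr. set (L := - ln rho).
  assert (HL : 0 < L).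
  { pose proof (ln_increasing rho 1 (proj1 Hr) (proj2 Hr)). rewrite ln_1 in *. unfold L. lra. }
  assert (HL3 : 0 < L ^ 3) by (apply pow_lt; lra).
  exists (6 / L ^ 3). intros k.
  assert (Hk : rho ^ k = / exp (INR k * L)).
  { rewrite <- (exp_ln (rho ^ k)) by (apply pow_lt; lra).
    rewrite ln_pow by lra. rewrite <- exp_Ropp. f_equal. unfold L. ring. }
  pose proof (pos_INR k) as Hk0. pose proof (exp_ge_cube (INR k * L) ltac:(nra)) as Hexp.
  pose proof (exp_pos (INR k * L)).
  rewrite Hk. apply (Rmult_le_reg_r (exp (INR k * L) * L ^ 3)); [nra|].
  replace (INR k * INR k * / exp (INR k * L) * (exp (INR k * L) * L ^ 3))
    with (INR k * INR k * L ^ 3) by (field; lra).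
  replace (6 / L ^ 3 * (exp (INR k * L) * L ^ 3)) with (6 * exp (INR k * L)) by (field; lra).
  destruct k as [|k]; [simpl in *; lra|].
  assert (1 <= INR (S k)) by (rewrite S_INR; pose proof (pos_INR k); lra).
  assert (INR (S k) * INR (S k) * L ^ 3 <= (INR (S k) * L) ^ 3).
  { replace ((INR (S k) * L) ^ 3) with (INR (S k) * (INR (S k) * INR (S k) * L ^ 3)) by ring.
    assert (0 <= INR (S k) * INR (S k) * L ^ 3) by (apply Rmult_le_pos; nra). nra. }
  lra.
Qed.

Lemma is_derive_Csum (F : nat -> C -> C) (D : nat -> C) (K : nat -> R) (z : C) (delta : R) :
  0 < delta ->
  (forall w, Cmod (w - z) < delta -> ex_series (fun n => Cmod (F n w))) ->
  ex_series (fun n => Cmod (D n)) -> ex_series K ->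
  (forall n w, Cmod (w - z) < delta ->
     Cmod (F n w - F n z - (w - z) * D n) <= K n * Cmod (w - z) ^ 2) ->
  @is_derive C_AbsRing C_NormedModule (fun w => Csum (fun n => F n w)) z (Csum D).
Proof.
  intros Hdelta HF HD HK Hrem.
  apply (is_derive_of_quadratic_remainder _ _ _ delta (2 * Series K) Hdelta).
  intros w Hw.
  assert (Hz : Cmod (z - z) < delta)
    by (replace (z - z)%C with (RtoC 0) by ring; rewrite Cmod_0; lra).
  assert (HDw : ex_series (fun n => Cmod ((w - z) * D n))).
  { apply (ex_series_Cmod_le _ (fun n => Cmod (w - z) * Cmod (D n))).
    - intros n. rewrite Cmod_mult. lra.
    - apply (ex_series_scal_l (Cmod (w - z)) (fun n => Cmod (D n))). exact HD. }
  rewrite <- Csum_sub by auto.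
  rewrite Cmult_comm, <- Csum_mult_r by exact HD.
  rewrite <- Csum_sub.
  - eapply Rle_trans; [apply (Cmod_Csum_le _ (fun n => K n * Cmod (w - z) ^ 2))|].
    + intros n. rewrite (Cmult_comm (D n)). apply Hrem, Hw.
    + apply (ex_series_scal_r (Cmod (w - z) ^ 2) K). exact HK.
    + rewrite Series_scal_r. lra.
  - apply ex_series_Cmod_sub; auto.
  - eapply ex_series_ext; [|exact HDw]. intros n. simpl. rewrite Cmult_comm. reflexivity.
Qed.

(** * The lacunary series *)

Definition lacunary_term (n : nat) (z : C) : C := (RtoC (weier_a ^ n) * z ^ (9 ^ n)%nat)%C.

Definition lacunary (z : C) : C := Csum (fun n => lacunary_term n z).

Lemma INR_pow9 (n : nat) : INR (9 ^ n)%nat = 9 ^ n.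
Proof. rewrite pow_INR. f_equal. simpl. ring. Qed.

Lemma pow9_S (n : nat) : exists j, (9 ^ n)%nat = S j.
Proof.
  pose proof (Nat.pow_nonzero 9 n ltac:(lia)). destruct (9 ^ n)%nat as [|j]; [lia|].
  exists j. reflexivity.
Qed.

Lemma Cmod_lacunary_term_le (n : nat) (z : C) : Cmod z <= 1 ->
  Cmod (lacunary_term n z) <= weier_a ^ n.
Proof.
  intros Hz. unfold lacunary_term. rewrite Cmod_scal_nonneg by (left; apply weier_a_pow_pos).
  pose proof (Cmod_Cpow_le z 1 (9 ^ n) Hz) as Hk. rewrite pow1 in Hk.
  pose proof (weier_a_pow_pos n). pose proof (Cmod_ge_0 (z ^ (9 ^ n)%nat)). nra.
Qed.

Lemma ex_series_Cmod_lacunary_term (z : C) : Cmod z <= 1 ->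
  ex_series (fun n => Cmod (lacunary_term n z)).
Proof.
  intros Hz. apply (ex_series_Cmod_le _ (fun n => weier_a ^ n)); [|apply ex_series_weier_a].
  intros n. apply Cmod_lacunary_term_le, Hz.
Qed.

Lemma lacunary_cis (t : R) :
  lacunary (cis t) = (weierstrass t, weierstrass (t - PI / 2)).
Proof.
  unfold lacunary, Csum, weierstrass. f_equal; apply Series_ext; intros n;
    unfold lacunary_term, weier_term; rewrite Cpow_cis, INR_pow9; unfold cis; simpl.
  - ring.
  - rewrite sin_pow9_mul. ring.
Qed.

Lemma lacunary_0 : lacunary (RtoC 0) = RtoC 0.
Proof.
  assert (E : forall n, lacunary_term n (RtoC 0) = RtoC 0).
  { intros n. unfold lacunary_term. destruct (pow9_S n) as [j ->]. rewrite Cpow_S. ring. }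
  unfold lacunary, Csum.
  rewrite (Series_ext _ (fun n => 0 * 0)), (Series_ext (fun n => Im _) (fun n => 0 * 0))
    by (intros n; rewrite E; simpl; ring).
  rewrite Series_scal_l. unfold RtoC. f_equal; ring.
Qed.

Lemma Cmod_lacunary_le (z : C) : Cmod z <= 1 -> Cmod (lacunary z) <= 20.
Proof.
  intros Hz. unfold lacunary. eapply Rle_trans.
  - apply (Cmod_Csum_le _ (fun n => weier_a ^ n)); [|apply ex_series_weier_a].
    intros n. apply Cmod_lacunary_term_le, Hz.
  - rewrite Series_weier_a. lra.
Qed.

Lemma Cmod_lacunary_sub_le (w z : C) (N : nat) : Cmod w <= 1 -> Cmod z <= 1 ->
  Cmod (lacunary w - lacunary z)
  <= 2 * (sum_f_R0 (fun n => 9 ^ n) N * Cmod (w - z) + 20 * weier_a ^ S N).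
Proof.
  intros Hw Hz. unfold lacunary.
  rewrite <- Csum_sub by (apply ex_series_Cmod_lacunary_term; assumption).
  set (y := fun n => Cmod (lacunary_term n w - lacunary_term n z)).
  assert (Hy2 : forall n, y n <= 2 * weier_a ^ n).
  { intros n. unfold y, Cminus. eapply Rle_trans; [apply Cmod_triangle|].
    rewrite Cmod_opp. pose proof (Cmod_lacunary_term_le n w Hw).
    pose proof (Cmod_lacunary_term_le n z Hz). lra. }
  assert (Exy : ex_series y).
  { apply (ex_series_Rabs_le _ (fun n => 2 * weier_a ^ n)); [|apply ex_series_weier_a_scal].
    intros n. rewrite Rabs_pos_eq by apply Cmod_ge_0. apply Hy2. }
  eapply Rle_trans; [apply (Cmod_Csum_le _ y); [intros; apply Rle_refl|exact Exy]|].
  rewrite (Series_incr_n y (S N)) by (lia || exact Exy). simpl pred.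
  apply Rmult_le_compat_l; [lra|]. apply Rplus_le_compat.
  - rewrite Rmult_comm, scal_sum. apply sum_Rle. intros n _. unfold y, lacunary_term.
    replace (RtoC (weier_a ^ n) * w ^ (9 ^ n)%nat - RtoC (weier_a ^ n) * z ^ (9 ^ n)%nat)%C
      with (RtoC (weier_a ^ n) * (w ^ (9 ^ n)%nat - z ^ (9 ^ n)%nat))%C by ring.
    rewrite Cmod_scal_nonneg by (left; apply weier_a_pow_pos).
    pose proof (Cmod_Cpow_sub_le w z (9 ^ n) Hw Hz) as H. rewrite INR_pow9 in H.
    pose proof (weier_a_pow_pos n). pose proof (weier_a_pow_le_1 n).
    pose proof (Cmod_ge_0 (w ^ (9 ^ n)%nat - z ^ (9 ^ n)%nat)).
    assert (0 <= 9 ^ n * Cmod (w - z)) by (apply Rmult_le_pos; [apply pow_le; lra|apply Cmod_ge_0]).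
    nra.
  - apply Rle_trans with (Series (fun k => (2 * weier_a ^ S N) * weier_a ^ k)).
    + apply Series_le; [|apply ex_series_weier_a_scal].
      intros k. split; [apply Cmod_ge_0|]. rewrite Rmult_assoc, <- pow_add. apply Hy2.
    + rewrite Series_scal_l. change (Series (pow weier_a)) with (Series (fun n => weier_a ^ n)).
      rewrite Series_weier_a. lra.
Qed.

Lemma lacunary_continuous : continuous_on_closed_disk lacunary.
Proof.
  intros z Hz eps Heps. unfold closed_disk in *.
  destruct (pow_lt_1_zero weier_a ltac:(unfold weier_a; rewrite Rabs_pos_eq; lra)
              (eps / 80) ltac:(lra)) as [N HN].
  specialize (HN (S N) ltac:(lia)). rewrite Rabs_pos_eq in HN by (left; apply weier_a_pow_pos).
  set (CN := sum_f_R0 (fun n => 9 ^ n) N).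
  assert (HCN : 0 <= CN) by (apply cond_pos_sum; intros; apply pow_le; lra).
  exists (eps / (4 * (CN + 1))). split; [apply Rdiv_lt_0_compat; lra|].
  intros w Hw Hwz. pose proof (Cmod_lacunary_sub_le w z N Hw Hz) as H. fold CN in H.
  assert (CN * Cmod (w - z) <= eps / 4).
  { apply Rle_trans with ((CN + 1) * Cmod (w - z)); [pose proof (Cmod_ge_0 (w - z)); nra|].
    apply (Rmult_lt_compat_l (CN + 1)) in Hwz; [|lra].
    replace ((CN + 1) * (eps / (4 * (CN + 1)))) with (eps / 4) in Hwz by (field; lra). lra. }
  lra.
Qed.

Definition lacunary_term_deriv (n : nat) (z : C) : C :=
  (RtoC (weier_a ^ n * INR (9 ^ n)%nat) * z ^ pred (9 ^ n))%C.

Lemma Cmod_lacunary_term_deriv_le (n : nat) (z : C) (rho K : R) : 0 < rho -> Cmod z <= rho ->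
  (forall k : nat, INR k * INR k * rho ^ k <= K) ->
  Cmod (lacunary_term_deriv n z) <= weier_a ^ n * (K / rho).
Proof.
  intros Hr Hz HK. unfold lacunary_term_deriv. pose proof (weier_a_pow_pos n).
  rewrite Cmod_mult, Cmod_R, Rabs_pos_eq by (apply Rmult_le_pos; [lra|apply pos_INR]).
  rewrite Rmult_assoc. apply Rmult_le_compat_l; [lra|].
  set (k := (9 ^ n)%nat). pose proof (Cmod_Cpow_pred_le z rho k Hr Hz) as Hpred.
  specialize (HK k). destruct (pow9_S n) as [j Hj]. fold k in Hj.
  assert (Hk1 : 1 <= INR k) by (rewrite Hj, S_INR; pose proof (pos_INR j); lra).
  assert (Hkk : INR k * rho ^ k <= INR k * INR k * rho ^ k).
  { assert (0 <= INR k * rho ^ k) by (apply Rmult_le_pos; [lra|apply pow_le; lra]). nra. }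
  apply (Rmult_le_reg_l (rho ^ 2)); [apply pow_lt; lra|].
  replace (rho ^ 2 * (K / rho)) with (rho * K) by (field; lra).
  replace (INR k * rho ^ S k) with (rho * (INR k * rho ^ k)) in Hpred by (simpl; ring).
  apply Rmult_le_compat_l with (r := rho) in Hkk; [|lra].
  apply Rmult_le_compat_l with (r := rho) in HK; [|lra]. lra.
Qed.

Lemma lacunary_term_remainder_le (n : nat) (w z : C) (rho K : R) :
  0 < rho -> Cmod w <= rho -> Cmod z <= rho ->
  (forall k : nat, INR k * INR k * rho ^ k <= K) ->
  Cmod (lacunary_term n w - lacunary_term n z - (w - z) * lacunary_term_deriv n z)
  <= weier_a ^ n * (K / rho ^ 2) * Cmod (w - z) ^ 2.
Proof.
  intros Hr Hw Hz HK.
  replace (lacunary_term n w - lacunary_term n z - (w - z) * lacunary_term_deriv n z)%C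
    with (RtoC (weier_a ^ n) * Cpow_remainder w z (9 ^ n))%C
    by (unfold lacunary_term, lacunary_term_deriv, Cpow_remainder; rewrite RtoC_mult; ring).
  rewrite Cmod_scal_nonneg by (left; apply weier_a_pow_pos). rewrite Rmult_assoc.
  apply Rmult_le_compat_l; [left; apply weier_a_pow_pos|].
  assert (0 < rho ^ 2) by (apply pow_lt; lra).
  apply (Rmult_le_reg_l (rho ^ 2)); [lra|].
  replace (rho ^ 2 * (K / rho ^ 2 * Cmod (w - z) ^ 2)) with (K * Cmod (w - z) ^ 2) by (field; lra).
  eapply Rle_trans; [apply (Cmod_Cpow_remainder_le w z rho (9 ^ n) Hr Hw Hz)|].
  apply Rmult_le_compat_r; [apply pow_le, Cmod_ge_0|apply HK].
Qed.

Lemma lacunary_is_derive (z : C) : Cmod z < 1 ->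
  exists l, @is_derive C_AbsRing C_NormedModule lacunary z l.
Proof.
  intros Hz. pose proof (Cmod_ge_0 z). set (rho := (1 + Cmod z) / 2).
  assert (Hrho : 0 < rho < 1) by (unfold rho; lra).
  assert (Hzr : Cmod z <= rho) by (unfold rho; lra).
  assert (Hgap : 0 < rho - Cmod z) by (unfold rho; lra).
  assert (Hball : forall w, Cmod (w - z) < rho - Cmod z -> Cmod w <= rho).
  { intros w Hw. replace w with (z + (w - z))%C by ring.
    pose proof (Cmod_triangle z (w - z)). lra. }
  destruct (sqr_mul_pow_bounded rho Hrho) as [K HK].
  exists (Csum (fun n => lacunary_term_deriv n z)).
  apply (is_derive_Csum lacunary_term (fun n => lacunary_term_deriv n z)
           (fun n => weier_a ^ n * (K / rho ^ 2)) z (rho - Cmod z) Hgap).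
  - intros w Hw. apply ex_series_Cmod_lacunary_term. pose proof (Hball w Hw). lra.
  - apply (ex_series_Cmod_le _ (fun n => weier_a ^ n * (K / rho))).
    + intros n. apply Cmod_lacunary_term_deriv_le; [lra|exact Hzr|exact HK].
    + apply (ex_series_scal_r (K / rho) (fun n => weier_a ^ n)). apply ex_series_weier_a.
  - apply (ex_series_scal_r (K / rho ^ 2) (fun n => weier_a ^ n)). apply ex_series_weier_a.
  - intros n w Hw. apply lacunary_term_remainder_le; [lra|apply Hball, Hw|exact Hzr|exact HK].
Qed.

(** * Functions on the closed disk *)

Lemma exists_choice_function {A B : Type} (P : A -> B -> Prop) :
  (forall x, exists y, P x y) -> exists g : A -> B, forall x, P x (g x).
Proof.
  intros H. exists (fun x => proj1_sig (constructive_indefinite_description _ (H x))).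
  intros x. exact (proj2_sig (constructive_indefinite_description _ (H x))).
Qed.

(* Lebesgue-number argument: [compactness_value_2d] on the square [-1,1]^2, with a gauge that
   at points outside the disk is small enough to keep its squares away from the disk. *)
Lemma continuous_on_closed_disk_uniform (f : C -> C) : continuous_on_closed_disk f ->
  forall eps, 0 < eps -> exists delta, 0 < delta /\
    forall z w, closed_disk z -> closed_disk w -> Cmod (w - z) < delta ->
      Cmod (f w - f z) < eps.
Proof.
  intros Hf eps Heps. unfold closed_disk in *.
  destruct (exists_choice_function (fun (p : R * R) (g : posreal) =>
     (Cmod p <= 1 -> forall w, Cmod w <= 1 -> Cmod (w - p) < 4 * g ->
        Cmod (f w - f p) < eps / 2) /\
     (1 < Cmod p -> 4 * g <= Cmod p - 1))) as [g Hg].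
  { intros [u v]. destruct (Rle_lt_dec (Cmod (u, v)) 1) as [Hin|Hout].
    - destruct (Hf (u, v) Hin (eps / 2) ltac:(lra)) as [d0 [Hd0 H0]].
      exists (mkposreal (d0 / 4) ltac:(lra)). simpl. split; [|lra].
      intros _ w Hw Hwuv. apply H0; [exact Hw|lra].
    - exists (mkposreal ((Cmod (u, v) - 1) / 4) ltac:(lra)). simpl. split; intros; lra. }
  destruct (compactness_value_2d (-1) 1 (-1) 1 (fun u v => g (u, v))) as [d Hd].
  exists d. split; [apply cond_pos|].
  intros [x y] w Hz Hw Hwz.
  assert (Hx : -1 <= x <= 1)
    by (pose proof (re_le_Cmod (x, y)); simpl in *; apply Rabs_le_between; lra).
  assert (Hy : -1 <= y <= 1)
    by (pose proof (im_le_Cmod (x, y)); simpl in *; apply Rabs_le_between; lra).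
  specialize (Hd x y Hx Hy). apply NNPP in Hd.
  destruct Hd as [u [v [Hu [Hv [Hxu [Hyv Hdg]]]]]].
  destruct (Hg (u, v)) as [Hin Hout]. pose proof (cond_pos (g (u, v))) as Hg0.
  assert (Hzuv : Cmod ((x, y) - (u, v)) < 2 * g (u, v)).
  { replace ((x, y) - (u, v))%C with ((x - u, y - v) : C)
      by (unfold Cminus, Cplus, Copp; simpl; f_equal; ring).
    eapply Rle_lt_trans; [apply Cmod_le_Rabs_add|]. lra. }
  destruct (Rle_lt_dec (Cmod (u, v)) 1) as [Hin1|Hout1].
  2: { exfalso. specialize (Hout Hout1).
       pose proof (Cmod_triangle ((u, v) - (x, y)) (x, y)) as H.
       replace ((u, v) - (x, y) + (x, y))%C with ((u, v) : C) in H
         by (unfold Cminus, Cplus, Copp; simpl; f_equal; ring).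
       rewrite Cmod_sub_sym in H. lra. }
  pose proof (Hin Hin1 (x, y) Hz ltac:(lra)) as H1.
  pose proof (Hin Hin1 w Hw ltac:(pose proof (Cmod_sub_triangle w (x, y) (u, v)); lra)) as H2.
  pose proof (Cmod_sub_triangle (f w) (f (u, v)) (f (x, y))) as H3.
  rewrite (Cmod_sub_sym (f (u, v))) in H3. lra.
Qed.

Lemma continuous_on_closed_disk_plus (F G : C -> C) :
  continuous_on_closed_disk F -> continuous_on_closed_disk G ->
  continuous_on_closed_disk (fun z => F z + G z)%C.
Proof.
  intros HF HG z Hz eps Heps.
  destruct (HF z Hz (eps / 2) ltac:(lra)) as [d1 [Hd1 H1]].
  destruct (HG z Hz (eps / 2) ltac:(lra)) as [d2 [Hd2 H2]].
  exists (Rmin d1 d2). split; [apply Rmin_glb_lt; assumption|].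
  intros w Hw Hwz. pose proof (Rmin_l d1 d2). pose proof (Rmin_r d1 d2).
  specialize (H1 w Hw ltac:(lra)). specialize (H2 w Hw ltac:(lra)).
  replace (F w + G w - (F z + G z))%C with ((F w - F z) + (G w - G z))%C by ring.
  eapply Rle_lt_trans; [apply Cmod_triangle|]. lra.
Qed.

Lemma continuous_on_closed_disk_scal (F : C -> C) (c : C) :
  continuous_on_closed_disk F -> continuous_on_closed_disk (fun z => c * F z)%C.
Proof.
  intros HF z Hz eps Heps. pose proof (Cmod_ge_0 c).
  destruct (HF z Hz (eps / (Cmod c + 1)) ltac:(apply Rdiv_lt_0_compat; lra)) as [d [Hd H1]].
  exists d. split; [exact Hd|]. intros w Hw Hwz. specialize (H1 w Hw Hwz).
  replace (c * F w - c * F z)%C with (c * (F w - F z))%C by ring.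
  rewrite Cmod_mult. pose proof (Cmod_ge_0 (F w - F z)).
  apply Rle_lt_trans with ((Cmod c + 1) * Cmod (F w - F z)); [nra|].
  apply (Rmult_lt_compat_l (Cmod c + 1)) in H1; [|lra].
  replace ((Cmod c + 1) * (eps / (Cmod c + 1))) with eps in H1 by (field; lra). exact H1.
Qed.

Definition dilate (f : C -> C) (r : R) (z : C) : C := f (RtoC r * z)%C.

Lemma closed_disk_scal (r : R) (z : C) : 0 <= r <= 1 -> closed_disk z -> closed_disk (RtoC r * z).
Proof.
  unfold closed_disk. intros Hr Hz. rewrite Cmod_scal_nonneg by lra.
  pose proof (Cmod_ge_0 z). nra.
Qed.

Lemma dilate_uniform_approx (f : C -> C) : continuous_on_closed_disk f ->
  forall eps, 0 < eps -> exists r, 0 < r < 1 /\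
    forall z, closed_disk z -> Cmod (dilate f r z - f z) < eps.
Proof.
  intros Hf eps Heps.
  destruct (continuous_on_closed_disk_uniform f Hf eps Heps) as [d [Hd H]].
  pose proof (Rmax_l (1 / 2) (1 - d / 2)). pose proof (Rmax_r (1 / 2) (1 - d / 2)).
  assert (Hr : 0 < Rmax (1 / 2) (1 - d / 2) < 1) by (split; [lra|apply Rmax_lub_lt; lra]).
  set (r := Rmax (1 / 2) (1 - d / 2)) in *.
  exists r. split; [exact Hr|]. intros z Hz. unfold dilate.
  apply H; [exact Hz|apply closed_disk_scal; [lra|exact Hz]|].
  replace (RtoC r * z - z)%C with (RtoC (r - 1) * z)%C by (rewrite RtoC_minus; ring).
  rewrite Cmod_mult, Cmod_R, Rabs_left1 by lra.
  unfold closed_disk in Hz. pose proof (Cmod_ge_0 z). nra.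
Qed.

Lemma dilate_continuous (f : C -> C) (r : R) : 0 <= r <= 1 ->
  continuous_on_closed_disk f -> continuous_on_closed_disk (dilate f r).
Proof.
  intros Hr Hf z Hz eps Heps.
  destruct (Hf _ (closed_disk_scal r z Hr Hz) eps Heps) as [d [Hd H]].
  exists d. split; [exact Hd|]. intros w Hw Hwz. apply H; [apply closed_disk_scal; assumption|].
  replace (RtoC r * w - RtoC r * z)%C with (RtoC r * (w - z))%C by ring.
  rewrite Cmod_scal_nonneg by lra. pose proof (Cmod_ge_0 (w - z)). nra.
Qed.

Lemma dilate_is_derive (f : C -> C) (r : R) : 0 <= r < 1 -> holomorphic_on_open_disk f ->
  forall z, closed_disk z -> exists l, @is_derive C_AbsRing C_NormedModule (dilate f r) z l.
Proof.
  intros Hr Hf z Hz. destruct (Hf (RtoC r * z)%C) as [l Hl].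
  { unfold open_disk. unfold closed_disk in Hz.
    rewrite Cmod_scal_nonneg by lra. pose proof (Cmod_ge_0 z). nra. }
  exists (RtoC r * l)%C. apply is_derive_dilate. exact Hl.
Qed.

Lemma continuity_on_circle (g : C -> C) : continuous_on_closed_disk g -> forall y,
  continuity_pt (fun t => Re (on_circle g t)) y /\ continuity_pt (fun t => Im (on_circle g t)) y.
Proof.
  intros Hg y.
  assert (Hproj : forall p : C -> R, (forall a b, p (a - b)%C = p a - p b) ->
            (forall a, Rabs (p a) <= Cmod a) -> continuity_pt (fun t => p (on_circle g t)) y).
  { intros p Hsub Hle eps Heps.
    destruct (Hg (cis y) (closed_disk_cis y) eps Heps) as [d [Hd H]].
    exists d. split; [exact Hd|]. intros t [_ Ht]. simpl in *. unfold R_dist in *.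
    unfold on_circle. rewrite <- Hsub. eapply Rle_lt_trans; [apply Hle|].
    apply (H (cis t) (closed_disk_cis t)).
    eapply Rle_lt_trans; [apply Cmod_cis_sub|exact Ht]. }
  split; apply Hproj.
  - exact Re_sub.
  - exact re_le_Cmod.
  - exact Im_sub.
  - exact im_le_Cmod.
Qed.

Lemma right_lipschitz_on_circle (F : C -> C) (theta : R) (l : C) :
  @is_derive C_AbsRing C_NormedModule F (cis theta) l ->
  exists L dL, 0 < dL /\ forall y, theta < y < theta + dL ->
    Cmod (F (cis y) - F (cis theta)) <= L * (y - theta).
Proof.
  intros Hl. destruct (is_derive_lipschitz F _ l Hl) as [d [Hd H]].
  exists (Cmod l + 1), d. split; [exact Hd|]. intros y Hy.
  pose proof (Cmod_cis_sub y theta) as Hc. rewrite Rabs_pos_eq in Hc by lra.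
  eapply Rle_trans; [apply H; lra|].
  apply Rmult_le_compat_l; [pose proof (Cmod_ge_0 l); lra|exact Hc].
Qed.

(** * Density *)

Definition perturb (f : C -> C) (r c : R) (z : C) : C := (dilate f r z + RtoC c * lacunary z)%C.

Lemma perturb_A0 (f : C -> C) (r c : R) : 0 < r < 1 -> A0 f -> A0 (perturb f r c).
Proof.
  intros Hr [Hc [Hh H0]]. split; [|split].
  - apply continuous_on_closed_disk_plus.
    + apply dilate_continuous; [lra|exact Hc].
    + apply continuous_on_closed_disk_scal, lacunary_continuous.
  - intros z Hz. unfold open_disk in Hz.
    destruct (dilate_is_derive f r ltac:(lra) Hh z ltac:(unfold closed_disk; lra)) as [l Hl].
    destruct (lacunary_is_derive z Hz) as [m Hm].
    exists (l + RtoC c * m)%C.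
    apply (@is_derive_plus C_AbsRing C_NormedModule); [exact Hl|].
    apply is_derive_Cmult_l. exact Hm.
  - unfold perturb, dilate. change (0, 0) with (RtoC 0) in *.
    rewrite Cmult_0_r, H0, lacunary_0. ring.
Qed.

Lemma perturb_in_Z (f : C -> C) (r c : R) : 0 < r < 1 -> c <> 0 -> A0 f ->
  in_Z (perturb f r c).
Proof.
  intros Hr Hc HA. pose proof (perturb_A0 f r c Hr HA) as [Hgc _].
  destruct HA as [_ [Hfh _]]. split; [apply continuity_on_circle, Hgc|].
  intros theta.
  destruct (dilate_is_derive f r ltac:(lra) Hfh (cis theta) (closed_disk_cis theta)) as [l Hl].
  destruct (right_lipschitz_on_circle _ theta l Hl) as [L [dL [HdL HL]]].
  assert (Hsplit : forall y, on_circle (perturb f r c) y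
            = (Re (dilate f r (cis y)) + c * weierstrass y,
               Im (dilate f r (cis y)) + c * weierstrass (y - PI / 2))).
  { intros y. change (on_circle (perturb f r c) y) with (perturb f r c (cis y)).
    unfold perturb. rewrite lacunary_cis.
    destruct (dilate f r (cis y)). unfold Re, Im, RtoC, Cplus, Cmult; simpl. f_equal; ring. }
  split.
  - apply (limsup_right_infinite_ext (fun y => Re (dilate f r (cis y)) + c * weierstrass y));
      [intros y; rewrite Hsplit; reflexivity|].
    apply (limsup_right_infinite_add_lipschitz _ _ theta L dL HdL).
    + intros y Hy. rewrite <- Re_sub. eapply Rle_trans; [apply re_le_Cmod|apply HL, Hy].
    + apply limsup_right_infinite_scal; [exact Hc|].
      apply weierstrass_limsup_right_infinite.
  - apply (limsup_right_infinite_ext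
             (fun y => Im (dilate f r (cis y)) + c * weierstrass (y - PI / 2)));
      [intros y; rewrite Hsplit; reflexivity|].
    apply (limsup_right_infinite_add_lipschitz _ _ theta L dL HdL).
    + intros y Hy. rewrite <- Im_sub. eapply Rle_trans; [apply im_le_Cmod|apply HL, Hy].
    + apply limsup_right_infinite_scal; [exact Hc|].
      apply limsup_right_infinite_shift, weierstrass_limsup_right_infinite.
Qed.

Lemma A0_in_Z_dense : dense_in_A0 (fun f => A0 f /\ in_Z f).
Proof.
  intros f HA eps Heps.
  destruct (dilate_uniform_approx f (proj1 HA) (eps / 2) ltac:(lra)) as [r [Hr Hap]].
  set (c := eps / 50). assert (Hc : c <> 0) by (unfold c; lra).
  exists (perturb f r c).
  split; [apply perturb_A0; assumption|].
  split; [split; [apply perturb_A0|apply perturb_in_Z]; assumption|].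
  intros z Hz. unfold perturb.
  replace (dilate f r z + RtoC c * lacunary z - f z)%C
    with ((dilate f r z - f z) + RtoC c * lacunary z)%C by ring.
  eapply Rle_lt_trans; [apply Cmod_triangle|].
  rewrite Cmod_scal_nonneg by (unfold c; lra).
  pose proof (Cmod_lacunary_le z Hz). specialize (Hap z Hz).
  assert (c * Cmod (lacunary z) <= c * 20) by (apply Rmult_le_compat_l; [unfold c|]; lra).
  unfold c in *. lra.
Qed.

(** * The G-delta property *)

Definition steep_with_margin (u : R -> R) (n : nat) (eps : R) : Prop :=
  forall theta, exists y, theta < y < theta + / (INR n + 1) /\
    INR n * (y - theta) + eps < Rabs (u y - u theta).

Definition steep (u : R -> R) (n : nat) : Prop :=
  exists eps, 0 < eps /\ steep_with_margin u n eps.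

Lemma steep_perturb (u v : R -> R) (n : nat) (eps : R) : 0 < eps ->
  steep_with_margin u n eps -> (forall t, Rabs (v t - u t) < eps / 4) -> steep v n.
Proof.
  intros Heps Hu Hv. exists (eps / 2). split; [lra|]. intros theta.
  destruct (Hu theta) as [y [Hy Hgap]]. exists y. split; [exact Hy|].
  pose proof (Hv y). pose proof (Hv theta).
  assert (Rabs (u y - u theta)
          <= Rabs (v y - v theta) + Rabs (v y - u y) + Rabs (v theta - u theta)).
  { replace (u y - u theta) with ((v y - v theta) - (v y - u y) + (v theta - u theta)) by ring.
    eapply Rle_trans; [apply Rabs_triang|]. apply Rplus_le_compat_r.
    eapply Rle_trans; [apply Rabs_triang|]. rewrite Rabs_Ropp. lra. }
  lra.
Qed.

Lemma limsup_right_infinite_of_steep (u : R -> R) :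
  (forall n, steep u n) -> forall theta, limsup_right_infinite u theta.
Proof.
  intros H theta. apply limsup_right_infinite_intro. intros M delta Hdelta.
  destruct (INR_unbounded (Rmax M (/ delta))) as [n Hn].
  pose proof (Rmax_l M (/ delta)). pose proof (Rmax_r M (/ delta)). pose proof (pos_INR n).
  destruct (H n) as [eps [Heps Hn']]. destruct (Hn' theta) as [y [Hy Hgap]].
  exists y. split.
  - split; [lra|]. apply Rlt_le_trans with (theta + / (INR n + 1)); [lra|].
    apply Rplus_le_compat_l. rewrite <- (Rinv_inv delta).
    apply Rlt_le, Rinv_lt_contravar; [apply Rmult_lt_0_compat; [apply Rinv_0_lt_compat|]|]; lra.
  - apply Rle_lt_trans with (INR n * (y - theta)); [apply Rmult_le_compat_r|]; lra.
Qed.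

Lemma steep_near (u : R -> R) (n : nat) (t : R) :
  continuity_pt u t -> limsup_right_infinite u t ->
  exists rho : posreal, forall t', Rabs (t' - t) < rho ->
    exists y, t' < y < t' + / (INR n + 1) /\ INR n * (y - t') + rho < Rabs (u y - u t').
Proof.
  intros Hc Hl. pose proof (pos_INR n).
  set (h := / (INR n + 1)). assert (Hh : 0 < h) by (apply Rinv_0_lt_compat; lra).
  destruct (limsup_right_infinite_elim u t Hl (INR n + 1) h Hh) as [y [Hy Hgap]].
  set (mu := y - t).
  destruct (Hc (mu / 4) ltac:(unfold mu; lra)) as [dc [Hdc Hcont]].
  set (rho := Rmin (mu / (4 * (INR n + 1))) (Rmin dc (t + h - y))).
  assert (Hrho : 0 < rho).
  { unfold rho. repeat apply Rmin_glb_lt; try lra. apply Rdiv_lt_0_compat; unfold mu; lra. }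
  assert (R1 : rho * (4 * (INR n + 1)) <= mu).
  { apply Rle_trans with (mu / (4 * (INR n + 1)) * (4 * (INR n + 1))).
    - apply Rmult_le_compat_r; [lra|apply Rmin_l].
    - right. field. lra. }
  assert (R2 : rho <= dc) by (eapply Rle_trans; [apply Rmin_r|apply Rmin_l]).
  assert (R3 : rho <= t + h - y) by (eapply Rle_trans; [apply Rmin_r|apply Rmin_r]).
  assert (Hmu : mu = y - t) by reflexivity.
  assert (R4 : rho <= mu / 4) by nra.
  exists (mkposreal rho Hrho). intros t' Ht'. simpl in Ht' |- *.
  apply Rabs_def2 in Ht'. exists y. split; [lra|].
  assert (Hct : Rabs (u t' - u t) < mu / 4).
  { destruct (Req_dec t' t) as [->|Hneq]; [rewrite Rminus_eq_0, Rabs_R0; unfold mu; lra|].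
    apply Hcont. split; [split; [exact I|congruence]|]. simpl. unfold R_dist.
    apply Rabs_def1; lra. }
  pose proof (Rabs_triang (u y - u t') (u t' - u t)) as Htri.
  replace (u y - u t' + (u t' - u t)) with (u y - u t) in Htri by ring.
  assert (INR n * (y - t') <= INR n * mu + INR n * rho).
  { unfold mu. rewrite <- Rmult_plus_distr_l. apply Rmult_le_compat_l; lra. }
  assert (INR n * rho + rho <= mu / 4) by nra.
  fold mu in Hgap. lra.
Qed.

(* A finite subcover of [0, 2 PI] by the neighbourhoods of [steep_near] gives a uniform margin,
   and periodicity transports it to the whole line. *)
Lemma steep_of_limsup_right_infinite (u : R -> R) (n : nat) :
  (forall t, continuity_pt u t) ->
  (forall x (q : Z), u (x + 2 * IZR q * PI) = u x) ->
  (forall theta, limsup_right_infinite u theta) -> steep u n.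
Proof.
  intros Hc Hper Hl.
  destruct (exists_choice_function (fun t (rho : posreal) => forall t', Rabs (t' - t) < rho ->
     exists y, t' < y < t' + / (INR n + 1) /\ INR n * (y - t') + rho < Rabs (u y - u t')))
    as [rho Hrho].
  { intros t. apply steep_near; [apply Hc|apply Hl]. }
  destruct (compactness_value_1d 0 (2 * PI) rho) as [d Hd].
  exists d. split; [apply cond_pos|].
  assert (Hbase : forall theta, 0 <= theta <= 2 * PI ->
            exists y, theta < y < theta + / (INR n + 1) /\
                      INR n * (y - theta) + d < Rabs (u y - u theta)).
  { intros theta Hth. specialize (Hd theta Hth). apply NNPP in Hd.
    destruct Hd as [t [_ [Htd Hdt]]].
    destruct (Hrho t theta Htd) as [y [Hy Hgap]]. exists y. split; [exact Hy|lra]. }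
  intros theta. pose proof PI_RGT_0.
  set (q := Zfloor (theta / (2 * PI))).
  pose proof (Zfloor_bound (theta / (2 * PI))) as Hq. fold q in Hq.
  set (theta0 := theta - 2 * IZR q * PI).
  assert (Hth0 : 0 <= theta0 <= 2 * PI).
  { unfold theta0. assert (theta = theta / (2 * PI) * (2 * PI)) by (field; lra). split; nra. }
  destruct (Hbase theta0 Hth0) as [y0 [Hy0 Hgap]].
  exists (y0 + 2 * IZR q * PI).
  replace theta with (theta0 + 2 * IZR q * PI) by (unfold theta0; ring).
  rewrite !Hper. split; [lra|].
  replace (y0 + 2 * IZR q * PI - (theta0 + 2 * IZR q * PI)) with (y0 - theta0) by ring.
  exact Hgap.
Qed.

Definition steep_on_circle (n : nat) (f : C -> C) : Prop :=
  steep (fun t => Re (on_circle f t)) n /\ steep (fun t => Im (on_circle f t)) n.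

Lemma steep_on_circle_open (n : nat) : open_in_A0 (steep_on_circle n).
Proof.
  intros f _ [[e1 [He1 H1]] [e2 [He2 H2]]].
  pose proof (Rmin_l e1 e2). pose proof (Rmin_r e1 e2).
  exists (Rmin e1 e2 / 4). split; [apply Rdiv_lt_0_compat; [apply Rmin_glb_lt|]; lra|].
  intros g _ Hclose. split.
  - apply (steep_perturb _ _ n e1 He1 H1). intros t. unfold on_circle.
    rewrite <- Re_sub. eapply Rle_lt_trans; [apply re_le_Cmod|].
    eapply Rlt_le_trans; [apply (Hclose (cis t) (closed_disk_cis t))|lra].
  - apply (steep_perturb _ _ n e2 He2 H2). intros t. unfold on_circle.
    rewrite <- Im_sub. eapply Rle_lt_trans; [apply im_le_Cmod|].
    eapply Rlt_le_trans; [apply (Hclose (cis t) (closed_disk_cis t))|lra].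
Qed.

Lemma in_Z_iff_steep (f : C -> C) : continuous_on_closed_disk f ->
  in_Z f <-> forall n, steep_on_circle n f.
Proof.
  intros Hf. split.
  - intros [Hc Hl] n. split; apply steep_of_limsup_right_infinite.
    + intros t. apply (Hc t).
    + intros x q. rewrite on_circle_period. reflexivity.
    + intros t. apply (Hl t).
    + intros t. apply (Hc t).
    + intros x q. rewrite on_circle_period. reflexivity.
    + intros t. apply (Hl t).
  - intros H. split; [apply continuity_on_circle, Hf|].
    intros theta. split; apply limsup_right_infinite_of_steep; intros n; apply (H n).
Qed.

Theorem proposition2p3 :
  let S := fun f : C -> C => A0 f /\ in_Z f in
  G_delta_in_A0 S /\ dense_in_A0 S.
Proof.
  intros S. split.
  - exists steep_on_circle. split; [exact steep_on_circle_open|].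
    intros f Hf. unfold S. rewrite (in_Z_iff_steep f (proj1 Hf)). tauto.
  - exact A0_in_Z_dense.
Qed.
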